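(* Let $\varphi\neq0$ and $\phi$ be real numbers and $$M_A=\begin{pmatrix} i\cosh\varphi & e^{i\phi}\sinh\varphi\\ e^{-i\phi}\sinh\varphi & -i\cosh\varphi\end{pmatrix},\qquad M_B=\begin{pmatrix} i&0\\0&-i\end{pmatrix}.$$ Let $M_1,M_2,\dots$ be independent random matrices, each equal to $M_A$ or $M_B$ with probability $1/2$, and let $\Pi_n=M_1\cdots M_n$. Then the Lyapunov exponent vanishes: $$\lambda_L=\lim_{n\to\infty}\frac1n\mathbb{E}\left(\log\|\Pi_n\|_F\right)=0.$$
   Context: $\|\cdot\|_F$ is the Frobenius norm, $\|M\|_F=(\sum_{i,j}|M_{ij}|^2)^{1/2}$. $\mathbb{E}$ denotes expectation over the random choices of $M_1,\dots,M_n$. *)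

From HB Require Import structures.
From mathcomp Require Import all_boot all_order all_algebra.
From mathcomp Require Import all_classical all_reals all_analysis.
From mathcomp Require Import complex.
Set Implicit Arguments. Unset Strict Implicit. Unset Printing Implicit Defensive.
Import Order.TTheory GRing.Theory Num.Theory.
Local Open Scope ring_scope.
Local Open Scope complex_scope.

Section Defs.
Variable R : realType.

Definition coshR (x : R) : R := (expR x + expR (- x)) / 2.
Definition sinhR (x : R) : R := (expR x - expR (- x)) / 2.

Definition cexpi (t : R) : R[i] := (cos t) +i* (sin t).

Definition cabs2 (z : R[i]) : R := complex.Re z ^+ 2 + complex.Im z ^+ 2.

Definition frob (M : 'M[R[i]]_2) : R :=
  Num.sqrt (\sum_(i < 2) \sum_(j < 2) cabs2 (M i j)).

Definition MA (vphi phi : R) : 'M[R[i]]_2 :=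
  \matrix_(i < 2, j < 2)
    if (i == 0) && (j == 0) then 'i * (coshR vphi)%:C
    else if (i == 0) && (j == 1) then cexpi phi * (sinhR vphi)%:C
    else if (i == 1) && (j == 0) then cexpi (- phi) * (sinhR vphi)%:C
    else - 'i * (coshR vphi)%:C.

Definition MB : 'M[R[i]]_2 :=
  \matrix_(i < 2, j < 2)
    if (i == 0) && (j == 0) then 'i
    else if (i == 1) && (j == 1) then - 'i
    else 0.

Definition Msel (vphi phi : R) (b : bool) : 'M[R[i]]_2 :=
  if b then MA vphi phi else MB.

Definition prodM (vphi phi : R) (n : nat) (s : {ffun 'I_n -> bool}) : 'M[R[i]]_2 :=
  \prod_(k < n) Msel vphi phi (s k).

(* E(log ||Pi_n||_F) where M_1..M_n are i.i.d. uniform on {M_A, M_B}: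
   average over all 2^n equally likely choice sequences. *)
Definition expected_log_frob (vphi phi : R) (n : nat) : R :=
  (2 ^+ n)^-1 * \sum_(s : {ffun 'I_n -> bool}) ln (frob (prodM vphi phi s)).

End Defs.

From HB Require Import structures.
From mathcomp Require Import all_boot all_order all_algebra.
From mathcomp Require Import all_classical all_reals all_analysis.
From mathcomp Require Import complex.
From mathcomp Require Import ring lra.
Set Implicit Arguments. Unset Strict Implicit. Unset Printing Implicit Defensive.
Import Order.TTheory GRing.Theory Num.Theory.
Import numFieldNormedType.Exports.
Local Open Scope classical_set_scope.
Local Open Scope ring_scope.

(* Both M_A and M_B are traceless of determinant 1, hence square to -1.  Since
   M_A (M_B M_A) = (M_B M_A)^-1 M_A, a word in M_A, M_B collapses to
   +-(M_B M_A)^t M_A^(n mod 2), where t is the alternating count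
   sum_{k : M_k = M_B} (-1)^k.  Thus log ||Pi_n||_F <= c + c' |t|, and |t| is
   at most 1 plus the modulus of a Rademacher sum of n terms, whose mean is
   O(sqrt n) by its second moment.  From below, det Pi_n = 1 forces
   ||Pi_n||_F >= 1.  Hence 0 <= E log ||Pi_n||_F <= a + b sqrt n. *)

Lemma ord2_cases (i : 'I_2) : i = 0 \/ i = 1.
Proof. by case: i => [[|[|//]] ?]; [left | right]; apply: val_inj. Qed.

Lemma sum_ord2 (V : nmodType) (F : 'I_2 -> V) : \sum_i F i = F 0 + F 1.
Proof. by rewrite !big_ord_recl big_ord0 addr0; congr (_ + F _); apply: val_inj. Qed.

Lemma mx2P (T : Type) (M N : 'M[T]_2) :
  M 0 0 = N 0 0 -> M 0 1 = N 0 1 -> M 1 0 = N 1 0 -> M 1 1 = N 1 1 -> M = N.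
Proof.
move=> e00 e01 e10 e11; apply/matrixP => i j.
by case: (ord2_cases i) => ->; case: (ord2_cases j) => ->.
Qed.

Lemma det_mx2 (K : comPzRingType) (M : 'M[K]_2) :
  \det M = M 0 0 * M 1 1 - M 0 1 * M 1 0.
Proof.
rewrite (expand_det_row M 0) sum_ord2 /cofactor !det_mx11 !mxE /=.
rewrite expr0 expr1 mul1r mulN1r mulrN.
by congr (M _ _ * M _ _ - M _ _ * M _ _); apply: val_inj.
Qed.

Lemma mx2_traceless_sqr (K : comPzRingType) (M : 'M[K]_2) :
  \tr M = 0 -> M * M = - (\det M)%:M.
Proof.
rewrite /mxtrace sum_ord2 det_mx2 => /eqP; rewrite addr_eq0 => /eqP M11.
by apply: mx2P; rewrite !mxE sum_ord2 ?mulr1n ?mulr0n M11 /=; ring.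
Qed.

Definition alt_count {m} (x : 'I_m -> bool) : int := \sum_(k < m | ~~ x k) (-1) ^+ k.

Section AlternatingWords.
Variables (R : unitRingType) (a b : R).
Hypotheses (a_sqr : a * a = -1) (b_sqr : b * b = -1).

Lemma mulr_ab_ba : a * b * (b * a) = 1.
Proof. by rewrite mulrA -(mulrA a) b_sqr mulrN1 mulNr a_sqr opprK. Qed.

Lemma mulr_ba_ab : b * a * (a * b) = 1.
Proof. by rewrite mulrA -(mulrA b) a_sqr mulrN1 mulNr b_sqr opprK. Qed.

Lemma unit_ba : b * a \is a GRing.unit.
Proof. by apply/unitrP; exists (a * b); rewrite mulr_ab_ba mulr_ba_ab. Qed.

Lemma invr_ba : (b * a)^-1 = a * b.
Proof. by apply: (mulrI unit_ba); rewrite mulrV ?unit_ba ?mulr_ba_ab. Qed.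

Lemma prod_ab_wordE m (x : 'I_m -> bool) : exists g : nat,
  \prod_(k < m) (if x k then a else b) = (-1) ^+ g * ((b * a) ^ alt_count x * a ^+ odd m).
Proof.
elim: m x => [|m IH] x.
  by exists 0%N; rewrite !big_ord0 /alt_count big_ord0 expr0 !mul1r.
rewrite big_ord_recr /=; have [g ->] := IH (fun k => x (widen_ord (leqnSn m) k)).
set t := alt_count _.
rewrite /alt_count big_mkcond big_ord_recr -big_mkcond /= -/(alt_count _) -/t.
have cK : (b * a) ^ t * (b * a) ^ (-1) = (b * a) ^ (t - 1) by rewrite exprzDr ?unit_ba.
have cS : (b * a) ^ t * (b * a) = (b * a) ^ (t + 1) by rewrite exprzDr ?unit_ba ?expr1z.
rewrite -(signr_odd _ m); case: (x ord_max); case: (odd m) => /=.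
- by exists g.+1; rewrite addr0 expr0 mulr1 -!mulrA a_sqr mulrN1 exprS mulN1r mulNr mulrN.
- by exists g; rewrite addr0 expr0 expr1 mulr1 mulrA.
- by exists g; rewrite expr1 expr0 mulr1 -cK exprN1 invr_ba !mulrA.
- exists g.+1; rewrite expr0 expr1 !mulr1 -cS -!mulrA a_sqr mulrN1.
  by rewrite exprS mulN1r !mulrN mulNr opprK.
Qed.

End AlternatingWords.

Section MatricesAB.
Variable R : realType.
Local Open Scope complex_scope.

Lemma cexpi_mulN (t : R) : cexpi t * cexpi (- t) = 1.
Proof. by rewrite /cexpi cosN sinN; simpc; rewrite -!expr2 cos2Dsin2 [sin t * _]mulrC addNr. Qed.

Lemma coshR_sqr_sub_sinhR (v : R) : coshR v ^+ 2 - sinhR v ^+ 2 = 1.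
Proof.
have e : expR v * expR (- v) = 1 by rewrite -expRD subrr expR0.
by rewrite /coshR /sinhR -[RHS]e; field.
Qed.

Lemma det_MA (vphi phi : R) : \det (MA vphi phi) = 1.
Proof.
rewrite det_mx2 !mxE /= [X in _ - X]mulrACA cexpi_mulN mul1r mulrACA mulrN -expr2 sqr_i opprK mul1r.
by rewrite -!rmorphM -rmorphB /= -!expr2 coshR_sqr_sub_sinhR.
Qed.

Lemma det_MB : \det (MB R) = 1.
Proof. by rewrite det_mx2 !mxE /= mulr0 subr0 mulrN -expr2 sqr_i opprK. Qed.

Lemma tr_MA (vphi phi : R) : \tr (MA vphi phi) = 0.
Proof. by rewrite /mxtrace sum_ord2 !mxE /= mulNr subrr. Qed.

Lemma tr_MB : \tr (MB R) = 0.
Proof. by rewrite /mxtrace sum_ord2 !mxE /= subrr. Qed.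

Lemma MA_sqr (vphi phi : R) : MA vphi phi * MA vphi phi = -1.
Proof. by rewrite mx2_traceless_sqr ?tr_MA // det_MA. Qed.

Lemma MB_sqr : MB R * MB R = -1.
Proof. by rewrite mx2_traceless_sqr ?tr_MB // det_MB. Qed.

End MatricesAB.

Section ComplexMatrixNorm.
Variable R : realType.
Local Open Scope complex_scope.

Definition cmod (z : R[i]) : R := Num.sqrt (cabs2 z).

Lemma cmodE z : (cmod z)%:C = `|z|.
Proof. by rewrite normc_def. Qed.

Lemma cmod_ge0 z : 0 <= cmod z.
Proof. exact: sqrtr_ge0. Qed.

Lemma cmod_sqr z : cmod z ^+ 2 = cabs2 z.
Proof. by rewrite sqr_sqrtr // addr_ge0 ?sqr_ge0. Qed.

Lemma cmod0 : cmod 0 = 0.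
Proof. by apply: complexI; rewrite cmodE normr0. Qed.

Lemma cmod1 : cmod 1 = 1.
Proof. by apply: complexI; rewrite cmodE normr1. Qed.

Lemma cmodN z : cmod (- z) = cmod z.
Proof. by apply: complexI; rewrite !cmodE normrN. Qed.

Lemma cmodM x y : cmod (x * y) = cmod x * cmod y.
Proof. by apply: complexI; rewrite cmodE normrM -!cmodE rmorphM. Qed.

Lemma cmod_sum (I : finType) (F : I -> R[i]) : cmod (\sum_i F i) <= \sum_i cmod (F i).
Proof.
rewrite -lecR cmodE; apply: le_trans (ler_norm_sum _ _ _) _.
by rewrite rmorph_sum; apply: ler_sum => i _; rewrite -cmodE.
Qed.

Lemma cmodB x y : cmod (x - y) <= cmod x + cmod y.
Proof. by have := ler_normB x y; rewrite -!cmodE -rmorphD lecR. Qed.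

Definition mxnorm1 {m n} (M : 'M[R[i]]_(m, n)) : R := \sum_i \sum_j cmod (M i j).

Lemma mxnorm1_ge0 {m n} (M : 'M[R[i]]_(m, n)) : 0 <= mxnorm1 M.
Proof. by apply: sumr_ge0 => i _; apply: sumr_ge0 => j _; apply: cmod_ge0. Qed.

Lemma mxnorm1N {m n} (M : 'M[R[i]]_(m, n)) : mxnorm1 (- M) = mxnorm1 M.
Proof. by apply: eq_bigr => i _; apply: eq_bigr => j _; rewrite mxE cmodN. Qed.

Lemma mxnorm1_signr {n} g (M : 'M[R[i]]_n) : mxnorm1 ((-1) ^+ g * M) = mxnorm1 M.
Proof. by rewrite -signr_odd; case: (odd g); rewrite ?expr1 ?expr0 ?mulN1r ?mul1r ?mxnorm1N. Qed.

Lemma mxnorm1_scalar n (a : R[i]) : mxnorm1 (a%:M : 'M[R[i]]_n) = n%:R * cmod a.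
Proof.
rewrite mulr_natl -[n in _ *+ n]card_ord -sumr_const; apply: eq_bigr => i _.
rewrite (bigD1 i) //= big1 => [|j /negPf ji]; rewrite !mxE ?eqxx ?mulr1n ?addr0 ?mul1r //.
by rewrite eq_sym ji mulr0n cmod0.
Qed.

Lemma mxnorm1_mul {m n p} (X : 'M[R[i]]_(m, n)) (Y : 'M[R[i]]_(n, p)) :
  mxnorm1 (X *m Y) <= mxnorm1 X * mxnorm1 Y.
Proof.
have row_le k : \sum_j cmod (Y k j) <= mxnorm1 Y.
  rewrite /mxnorm1 (bigD1 k) //= lerDl.
  by apply: sumr_ge0 => l _; apply: sumr_ge0 => j _; apply: cmod_ge0.
rewrite /mxnorm1 mulr_suml; apply: ler_sum => i _.
apply: (@le_trans _ _ (\sum_j \sum_k cmod (X i k) * cmod (Y k j))).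
  apply: ler_sum => j _; rewrite mxE; apply: le_trans (cmod_sum _) _.
  by under eq_bigr do rewrite cmodM.
rewrite exchange_big mulr_suml; apply: ler_sum => k _.
by rewrite -mulr_sumr ler_wpM2l ?cmod_ge0 ?row_le.
Qed.

Lemma mxnorm1X {n} (M : 'M[R[i]]_n.+1) k : mxnorm1 (M ^+ k) <= n.+1%:R * mxnorm1 M ^+ k.
Proof.
elim: k => [|k IH]; first by rewrite !expr0 mxnorm1_scalar cmod1 mulr1.
rewrite !exprSr mulrA; apply: le_trans (mxnorm1_mul (M ^+ k) M) _.
by rewrite ler_wpM2r ?mxnorm1_ge0.
Qed.

Lemma mxnorm1_exprz {n} (M : 'M[R[i]]_n.+1) (K : R) (t : int) :
  mxnorm1 M <= K -> mxnorm1 M^-1 <= K -> mxnorm1 (M ^ t) <= n.+1%:R * K ^+ `|t|%N.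
Proof.
have powK (N : 'M[R[i]]_n.+1) k : mxnorm1 N <= K -> mxnorm1 (N ^+ k) <= n.+1%:R * K ^+ k.
  move=> NK; apply: le_trans (mxnorm1X N k) _; apply: ler_wpM2l => //.
  by apply: lerXn2r; rewrite ?nnegrE ?(le_trans _ NK) ?mxnorm1_ge0.
case: t => k MK MVK; first by rewrite -exprnP; apply: powK.
by rewrite NegzE -exprnN -exprVn; apply: powK.
Qed.

Lemma frob_sqr (M : 'M[R[i]]_2) : frob M ^+ 2 = \sum_i \sum_j cmod (M i j) ^+ 2.
Proof.
under [RHS]eq_bigr do under eq_bigr do rewrite cmod_sqr.
by rewrite sqr_sqrtr // sumr_ge0 // => i _; rewrite sumr_ge0 // => j _; rewrite addr_ge0 ?sqr_ge0.
Qed.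

Lemma frob_ge0 (M : 'M[R[i]]_2) : 0 <= frob M.
Proof. exact: sqrtr_ge0. Qed.

Lemma frob_le_mxnorm1 (M : 'M[R[i]]_2) : frob M <= mxnorm1 M.
Proof.
rewrite -ler_sqr ?nnegrE ?mxnorm1_ge0 ?frob_ge0 // frob_sqr /mxnorm1 !sum_ord2.
have := cmod_ge0 (M 0 0); have := cmod_ge0 (M 0 1).
have := cmod_ge0 (M 1 0); have := cmod_ge0 (M 1 1).
nra.
Qed.

Lemma frob_ge1 (M : 'M[R[i]]_2) : \det M = 1 -> 1 <= frob M.
Proof.
rewrite det_mx2 => detM.
have ad_bc : 1 <= cmod (M 0 0) * cmod (M 1 1) + cmod (M 0 1) * cmod (M 1 0).
  by rewrite -!cmodM -[leLHS]cmod1 -detM cmodB.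
rewrite -ler_sqr ?nnegrE ?ler01 ?frob_ge0 // expr1n frob_sqr !sum_ord2.
have := sqr_ge0 (cmod (M 0 0) - cmod (M 1 1)); have := sqr_ge0 (cmod (M 0 1) - cmod (M 1 0)).
nra.
Qed.

End ComplexMatrixNorm.

Section RademacherSums.
Variable R : rcfType.

Definition flip_ffun {n} (j : 'I_n) (s : {ffun 'I_n -> bool}) : {ffun 'I_n -> bool} :=
  [ffun i => s i (+) (i == j)].

Lemma flip_ffunK {n} (j : 'I_n) : involutive (flip_ffun j).
Proof. by move=> s; apply/ffunP => i; rewrite !ffunE addbK. Qed.

Lemma card_ffun_bool n : #|{ffun 'I_n -> bool}| = (2 ^ n)%N.
Proof. by rewrite card_ffun card_bool card_ord. Qed.

Lemma sum_ffun_signrM n (j k : 'I_n) :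
  \sum_(s : {ffun 'I_n -> bool}) (-1) ^+ s j * (-1) ^+ s k =
  if j == k then 2 ^+ n else 0 :> R.
Proof.
case: eqVneq => [<-|jk].
  under eq_bigr do rewrite -expr2 sqrr_sign.
  by rewrite sumr_const card_ffun_bool natrX.
set X := \sum_s _.
suff : X = - X by lra.
rewrite {1}/X (reindex_inj (inv_inj (flip_ffunK j))) -sumrN.
apply: eq_bigr => s _; rewrite !ffunE eqxx addbT eq_sym (negPf jk) addbF signrN.
by rewrite mulNr.
Qed.

Lemma sum_rademacher_sqr n (c : 'I_n -> R) :
  \sum_(s : {ffun 'I_n -> bool}) (\sum_k c k * (-1) ^+ s k) ^+ 2 = 2 ^+ n * \sum_k c k ^+ 2.
Proof.
under eq_bigr do rewrite expr2 big_distrlr /=.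
rewrite exchange_big mulr_sumr; apply: eq_bigr => j _ /=.
rewrite exchange_big (bigD1 j) //= [X in _ + X]big1 ?addr0 => [|k kj].
  by under eq_bigr do rewrite mulrACA; rewrite -mulr_sumr sum_ffun_signrM eqxx mulrC expr2.
by under eq_bigr do rewrite mulrACA; rewrite -mulr_sumr sum_ffun_signrM eq_sym (negPf kj) mulr0.
Qed.

Lemma sum_abs_le_of_sum_sqr (I : finType) (F : I -> R) (q : R) : 0 < q ->
  \sum_i F i ^+ 2 <= q ^+ 2 * #|I|%:R -> \sum_i `|F i| <= q * #|I|%:R.
Proof.
move=> q_gt0 sumF2.
have amgm i : `|F i| * (2 * q) <= F i ^+ 2 + q ^+ 2.
  by rewrite -(real_normK (num_real (F i))); have := sqr_ge0 (`|F i| - q); nra.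
have : \sum_i `|F i| * (2 * q) <= \sum_i (F i ^+ 2 + q ^+ 2).
  by apply: ler_sum => i _; apply: amgm.
rewrite -mulr_suml big_split /= sumr_const -[q ^+ 2 *+ _]mulr_natr.
by nra.
Qed.

Lemma sum_signr_nat n : \sum_(k < n) (-1) ^+ k = (odd n)%:R :> R.
Proof.
elim: n => [|n IH]; first by rewrite big_ord0.
by rewrite big_ord_recr /= IH -signr_odd; case: (odd n); rewrite /= ?expr0 ?expr1 ?addrN ?add0r.
Qed.

Definition alt_sign_sum {n} (x : 'I_n -> bool) : R := \sum_(k < n) (-1) ^+ k * (-1) ^+ x k.

Lemma alt_countE n (x : 'I_n -> bool) :
  2 * (alt_count x)%:~R = (odd n)%:R + alt_sign_sum x :> R.
Proof.
rewrite /alt_count big_mkcond rmorph_sum mulr_sumr -sum_signr_nat -big_split /=.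
apply: eq_bigr => k _; case: (x k) => /=.
  by rewrite expr1 mulrN1 addrN mulr0.
by rewrite rmorphXn rmorphN1 expr0 mulr1 mulr2n mulrDl mul1r.
Qed.

Lemma abs_alt_count_le n (x : 'I_n -> bool) :
  `|(alt_count x)%:~R| <= 1 + `|alt_sign_sum x| :> R.
Proof.
have odd_le1 : (odd n)%:R <= 1 :> R by case: (odd n); rewrite ?ler01.
apply: (@le_trans _ _ `|2 * (alt_count x)%:~R|).
  by rewrite normrM normr_nat; have := normr_ge0 ((alt_count x)%:~R : R); lra.
by rewrite alt_countE; apply: le_trans (ler_normD _ _) _; rewrite ger0_norm ?ler0n // lerD2r.
Qed.

Lemma sum_abs_alt_sign_sum n :
  \sum_(s : {ffun 'I_n -> bool}) `|alt_sign_sum s| <= Num.sqrt n%:R * 2 ^+ n.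
Proof.
case: n => [|n].
  rewrite big1 ?sqrtr0 ?mul0r // => s _.
  by rewrite /alt_sign_sum big_ord0 normr0.
have card_signs : #|{ffun 'I_n.+1 -> bool}|%:R = 2 ^+ n.+1 :> R.
  by rewrite card_ffun_bool natrX.
rewrite -card_signs; apply: sum_abs_le_of_sum_sqr; first by rewrite sqrtr_gt0 ltr0n.
rewrite sum_rademacher_sqr sqr_sqrtr ?ler0n // card_signs mulrC.
by under eq_bigr do rewrite sqrr_sign; rewrite sumr_const card_ord.
Qed.

End RademacherSums.

Arguments alt_sign_sum {R n}.

Section LyapunovBound.
Variables (R : realType) (vphi phi : R).
Local Notation A := (MA vphi phi).
Local Notation B := (MB R).

Lemma det_prodM n (s : {ffun 'I_n -> bool}) : \det (prodM vphi phi s) = 1.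
Proof.
apply: (big_ind (fun M => \det M = 1)); first exact: det1.
  by move=> X Y dX dY; rewrite det_mulmx dX dY mulr1.
by move=> k _; rewrite /Msel; case: (s k); [exact: det_MA | exact: det_MB].
Qed.

Let kappa := 1 + mxnorm1 (B * A) + mxnorm1 (B * A)^-1.

Lemma kappa_ge1 : 1 <= kappa.
Proof. by rewrite /kappa -addrA lerDl addr_ge0 ?mxnorm1_ge0. Qed.

Lemma mxnorm1_prodM_le n (s : {ffun 'I_n -> bool}) :
  mxnorm1 (prodM vphi phi s) <= 2 * kappa ^+ `|alt_count s|%N * (2 + mxnorm1 A).
Proof.
rewrite /prodM /Msel; have [g ->] := prod_ab_wordE (MA_sqr vphi phi) (MB_sqr R) s.
rewrite mxnorm1_signr; apply: le_trans (mxnorm1_mul _ _) _.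
apply: ler_pM; rewrite ?mxnorm1_ge0 //.
  apply: mxnorm1_exprz; rewrite /kappa;
    have := mxnorm1_ge0 (B * A); have := mxnorm1_ge0 (B * A)^-1; lra.
case: (odd n); first by rewrite expr1 lerDr.
by rewrite expr0 mxnorm1_scalar cmod1 mulr1 lerDl mxnorm1_ge0.
Qed.

Lemma ln_frob_prodM_le n (s : {ffun 'I_n -> bool}) :
  ln (frob (prodM vphi phi s)) <=
  ln (2 * (2 + mxnorm1 A)) + ln kappa * (1 + `|alt_sign_sum s|).
Proof.
have frob_gt0 : 0 < frob (prodM vphi phi s).
  by apply: lt_le_trans (frob_ge1 (det_prodM s)); rewrite ltr01.
have kappa_gt0 : 0 < kappa by apply: lt_le_trans kappa_ge1.
have cst_gt0 : 0 < 2 * (2 + mxnorm1 A) by rewrite mulr_gt0 ?ltr_wpDr ?mxnorm1_ge0.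
have frob_le : frob (prodM vphi phi s) <= 2 * (2 + mxnorm1 A) * kappa ^+ `|alt_count s|%N.
  apply: le_trans (frob_le_mxnorm1 _) _; apply: le_trans (mxnorm1_prodM_le s) _.
  by rewrite mulrAC -mulrA.
apply: le_trans (_ : _ <= ln (2 * (2 + mxnorm1 A) * kappa ^+ `|alt_count s|%N)) _.
  by rewrite ler_ln ?posrE // mulr_gt0 ?exprn_gt0.
rewrite lnM ?posrE ?exprn_gt0 // lnXn // lerD2l -mulr_natr natr_absz intr_norm.
by apply: ler_wpM2l; [rewrite ln_ge0 // kappa_ge1 | apply: abs_alt_count_le].
Qed.

Lemma expected_log_frob_bound :
  exists a b : R, forall n, 0 <= expected_log_frob vphi phi n <= a + b * Num.sqrt n%:R.
Proof.
set c := ln (2 * (2 + mxnorm1 A)); exists (c + ln kappa), (ln kappa) => n.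
have lnk_ge0 : 0 <= ln kappa by rewrite ln_ge0 // kappa_ge1.
have pow_gt0 : 0 < 2 ^+ n :> R by rewrite exprn_gt0.
have ln_frob_ge0 (s : {ffun 'I_n -> bool}) : 0 <= ln (frob (prodM vphi phi s)).
  by rewrite ln_ge0 // frob_ge1 // det_prodM.
rewrite /expected_log_frob; apply/andP; split.
  apply: mulr_ge0; first by rewrite invr_ge0 ltW.
  by apply: sumr_ge0 => s _; apply: ln_frob_ge0.
rewrite ler_pdivrMl //; apply: le_trans (ler_sum _ (fun s _ => ln_frob_prodM_le s)) _.
under eq_bigr do rewrite [ln kappa * _]mulrDr mulr1.
rewrite !big_split /= !sumr_const -mulr_sumr card_ffun_bool.
rewrite -[c *+ _]mulr_natr -[ln kappa *+ _]mulr_natr natrX.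
have := ler_wpM2l lnk_ge0 (sum_abs_alt_sign_sum R n).
lra.
Qed.

End LyapunovBound.

Lemma cvg_div_n_of_sqrt_bound (R : realType) (u : nat -> R) (a b : R) :
  (forall n, 0 <= u n <= a + b * Num.sqrt n%:R) ->
  (fun n => n%:R^-1 * u n) @ \oo --> 0.
Proof.
move=> u_bound; rewrite -cvg_shiftS /=.
have bound_cvg0 : (fun n => a * harmonic n + b * Num.sqrt (harmonic n)) @ \oo --> (0 : R).
  rewrite -[0 : R]addr0; apply: cvgD.
    by rewrite -(mulr0 a); apply: cvgMl_tmp; apply: cvg_harmonic.
  rewrite -(mulr0 b) -sqrtr0; apply: cvgMl_tmp.
  exact: continuous_cvg (@sqrt_continuous R 0) cvg_harmonic.
apply: (squeeze_cvgr _ (cvg_cst 0) bound_cvg0); apply: nearW => n /=.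
have /andP[u_ge0 u_le] := u_bound n.+1.
have inv_ge0 : 0 <= n.+1%:R^-1 :> R by rewrite invr_ge0 ler0n.
have sqrt_div : Num.sqrt n.+1%:R * n.+1%:R^-1 = Num.sqrt n.+1%:R^-1 :> R.
  rewrite sqrtrV ?ler0n // -{2}(sqr_sqrtr (ler0n _ n.+1)) invfM mulrA divff ?mul1r //.
rewrite mulr_ge0 //= mulrC; apply: le_trans (ler_wpM2r inv_ge0 u_le) _.
by rewrite mulrDl -mulrA sqrt_div.
Qed.

Theorem mainTheorem6 (R : realType) (vphi phi : R) (hvphi : vphi != 0) :
  (fun n : nat => (n%:R)^-1 * expected_log_frob vphi phi n) @ \oo --> (0 : R).
Proof.
have [a [b bound]] := expected_log_frob_bound vphi phi.
exact: cvg_div_n_of_sqrt_bound bound.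
Qed.
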